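(* Let $R$ be a ring with identity and involution $*$. The following conditions are equivalent: (1) $R$ is directly finite, i.e. for all $a,b\in R$, $ab=1$ implies $ba=1$; (2) for all $a,b\in R$: $aba=a$, $(ab)^*=ab$ and $ab^2=b$ hold if and only if $a$ is core invertible with $a^{\oplus}=b$.
   Context: An involution on $R$ satisfies $(a^* )^*=a$, $(ab)^*=b^*a^*$, $(a+b)^*=a^*+b^*$. An element $x\in R$ is a core inverse of $a$ if $axa=a$, $xR=aR$ and $Rx=Ra^*$; it is unique when it exists and is denoted $a^{\oplus}$. *)

From mathcomp Require Import all_boot all_algebra.
Set Implicit Arguments. Unset Strict Implicit. Unset Printing Implicit Defensive.
Import GRing.Theory.
Local Open Scope ring_scope.

Definition involution (R : pzRingType) (star : R -> R) : Prop :=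
  [/\ forall a : R, star (star a) = a,
      forall a b : R, star (a * b) = star b * star a &
      forall a b : R, star (a + b) = star a + star b].

Definition rideal (R : pzRingType) (x : R) : R -> Prop := fun y => exists r : R, y = x * r.
Definition lideal (R : pzRingType) (x : R) : R -> Prop := fun y => exists r : R, y = r * x.

Definition core_inverse (R : pzRingType) (star : R -> R) (a x : R) : Prop :=
  [/\ a * x * a = a,
      (forall y, rideal x y <-> rideal a y) &
      (forall y, lideal x y <-> lideal (star a) y)].

Definition directly_finite (R : pzRingType) : Prop :=
  forall a b : R, a * b = 1 -> b * a = 1.

(* A core inverse b of a always satisfies aba = a, (ab)^* = ab and ab^2 = b.
   These three equations make b a core inverse as soon as also
   ba^2 = a, since then bR = aR and Rb = Ra^*.  In a directly finite ring
   ba^2 = a is forced: x = a + (1 - ab) and y = b + (1 - ba) satisfy xy = 1,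
   hence yx = 1, and xb = ab gives ya = yxba = ba.  Conversely, if (2) holds and
   ab = 1, then b satisfies the three equations, so by (2) it is a core
   inverse of a; from a = br one gets ba^2 = a and then ba = (ba^2)b = ab = 1. *)
From mathcomp Require Import all_boot all_algebra.
Import GRing.Theory.
Local Open Scope ring_scope.

Section PrincipalIdeals.

Variable R : pzRingType.

Lemma rideal_eq (x a : R) :
  rideal a x -> rideal x a -> forall y, rideal x y <-> rideal a y.
Proof.
move=> [s x_as] [t a_xt] y; split; case=> r ->.
- by exists (s * r); rewrite x_as mulrA.
- by exists (t * r); rewrite a_xt mulrA.
Qed.

Lemma lideal_eq (x a : R) :
  lideal a x -> lideal x a -> forall y, lideal x y <-> lideal a y.
Proof.
move=> [s x_sa] [t a_tx] y; split; case=> r ->.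
- by exists (r * s); rewrite x_sa mulrA.
- by exists (r * t); rewrite a_tx mulrA.
Qed.

End PrincipalIdeals.

Section CoreInverse.

Variables (R : pzRingType) (star : R -> R).
Hypothesis Hstar : involution star.

Lemma involution1 : star 1 = 1.
Proof.
case: Hstar => starK starM _.
by have := starM (star 1) 1; rewrite mulr1 starK mulr1 => <-.
Qed.

Lemma core_inverse_eqs (a b : R) :
  core_inverse star a b -> a * b * a = a /\ star (a * b) = a * b /\ a * b ^+ 2 = b.
Proof.
case: Hstar => starK starM _ [aba_a bR_aR Rb_Ras].
have [s b_as] : rideal a b by apply/bR_aR; exists 1; rewrite mulr1.
have [u b_uas] : lideal (star a) b by apply/Rb_Ras; exists 1; rewrite mul1r.
have b_bsab : b = b * star (a * b) by rewrite {1}b_uas -{1}aba_a starM mulrA -b_uas.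
have ab_sym : star (a * b) = a * b.
  have ab_absab : a * b = a * b * star (a * b) by rewrite -mulrA -b_bsab.
  by rewrite {1}ab_absab starM starK -ab_absab.
split=> //; split=> //.
by rewrite expr2 mulrA {2}b_as mulrA aba_a -b_as.
Qed.

Lemma core_inverse_of_eqs (a b : R) :
  a * b * a = a -> star (a * b) = a * b -> a * b ^+ 2 = b -> b * a * a = a ->
  core_inverse star a b.
Proof.
case: Hstar => starK starM _ aba_a ab_sym abb_b baa_a.
have bab_b : b * a * b = b by rewrite -{2}abb_b mulrA baa_a abb_b.
split=> //.
- apply: rideal_eq.
  + by exists (b ^+ 2); rewrite abb_b.
  + by exists (a * a); rewrite mulrA baa_a.
- apply: lideal_eq.
  + by exists (b * star b); rewrite -mulrA -starM ab_sym mulrA bab_b.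
  + by exists (star a * a); rewrite -mulrA -ab_sym -starM aba_a.
Qed.

Lemma core_inverse_right_inverse (a b : R) :
  core_inverse star a b -> a * b = 1 -> b * a = 1.
Proof.
move=> [_ bR_aR _] ab1.
have [r a_br] : rideal b a by apply/bR_aR; exists 1; rewrite mulr1.
have baa_a : b * a * a = a by rewrite {2}a_br mulrA -(mulrA b) ab1 mulr1 -a_br.
by rewrite -[b * a]mulr1 -ab1 mulrA baa_a.
Qed.

End CoreInverse.

Lemma directly_finite_inner_absorb (R : pzRingType) (a b : R) :
  directly_finite R -> a * b * a = a -> a * b * b = b -> b * a * a = a.
Proof.
move=> dfR aba_a abb_b.
pose x := a + (1 - a * b); pose y := b + (1 - b * a).
have xy1 : x * y = 1.
  rewrite /x /y !(mulrDl, mulrDr, mulrN, mulNr, mulr1, mul1r) !mulrA aba_a abb_b.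
  rewrite opprK subrr addr0 -!addrA [b + _]addrCA [b + _]addrCA addNKr.
  by rewrite [- (b * a) + _]addrCA addNr addr0 addrCA subrr addr0.
have xb_ab : x * b = a * b by rewrite /x mulrDl mulrBl mul1r abb_b subrr addr0.
have ya_ba : y * a = b * a by rewrite -{1}aba_a -xb_ab !mulrA (dfR _ _ xy1) mul1r.
move: ya_ba; rewrite /y mulrDl mulrBl mul1r => /eqP.
by rewrite -subr_eq0 addrAC subrr add0r subr_eq0 => /eqP <-.
Qed.

Theorem theorem3p9 (R : pzRingType) (star : R -> R) (Hstar : involution star) :
  directly_finite R <->
  (forall a b : R,
     (a * b * a = a /\ star (a * b) = a * b /\ a * b ^+ 2 = b) <->
     core_inverse star a b).
Proof.
split.
- move=> dfR a b; split; last exact: core_inverse_eqs.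
  case=> aba_a [ab_sym abb_b].
  apply: core_inverse_of_eqs => //.
  by apply: directly_finite_inner_absorb; rewrite // -mulrA -expr2.
- move=> eqs_core a b ab1.
  apply: (@core_inverse_right_inverse _ star) => //.
  apply/eqs_core; rewrite ab1 (@involution1 _ _ Hstar) mul1r.
  by split=> //; split=> //; rewrite expr2 mulrA ab1 mul1r.
Qed.
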